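(* The object $D_0$ is a terminal object of $\widetilde{\Theta}$.
   Context: $\mathbb{G}$ is the category generated by objects $D_i$ ($i\ge0$) and $\sigma_i,\tau_i:D_{i-1}\to D_i$ with $\sigma_{i+1}\sigma_i=\tau_{i+1}\sigma_i$, $\sigma_{i+1}\tau_i=\tau_{i+1}\tau_i$. Globular sums $D_{i_1}\amalg_{D_{i'_1}}\cdots\amalg_{D_{i'_{n-1}}}D_{i_n}$ ($i_k>i'_k<i_{k+1}$) are the colimits of the zigzags $D_{i_1}\xleftarrow{\sigma}D_{i'_1}\xrightarrow{\tau}D_{i_2}\leftarrow\cdots$ of iterated sources and targets; $\Theta_0$ is the free globular extension on $\mathbb{G}$. $\widetilde{\Theta}$ is the universal groupoidal globular extension, i.e. the universal category under $\Theta_0$ in which globular sums exist, equipped with morphisms $\nabla^i_j:D_i\to D_i\amalg_{D_j}D_i$, $\kappa_i:D_{i+1}\to D_i$, $\omega^i_j:D_i\to D_i$ ($i>j\ge0$) having the expected sources and targets and satisfying the identities dual to the axioms of strict $\infty$-groupoids (associativity, exchange, units, functoriality of units, inverses); $D_0$ denotes the image of $D_0\in\mathbb{G}$ in $\widetilde{\Theta}$. *)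

From mathcomp Require Import all_boot.
Set Implicit Arguments. Unset Strict Implicit. Unset Printing Implicit Defensive.

Record Category := {
  Ob :> Type;
  hom : Ob -> Ob -> Type;
  idm : forall a, hom a a;
  comp : forall a b c, hom b c -> hom a b -> hom a c;
  compA : forall a b c d (f : hom a b) (g : hom b c) (h : hom c d),
      comp h (comp g f) = comp (comp h g) f;
  comp1m : forall a b (f : hom a b), comp (idm b) f = f;
  compm1 : forall a b (f : hom a b), comp f (idm a) = f }.
Arguments hom {_} _ _.
Arguments idm {_} _.
Arguments comp {_ _ _ _} _ _.

Definition is_terminal (C : Category) (x : C) : Prop :=
  forall y : C, exists f : hom y x, forall g : hom y x, g = f.

Record Functor (C C' : Category) := {
  fob : C -> C';
  fhom : forall a b : C, hom a b -> hom (fob a) (fob b);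
  fhom_id : forall a : C, fhom (idm a) = idm (fob a);
  fhom_comp : forall (a b c : C) (f : hom a b) (g : hom b c),
      fhom (comp g f) = comp (fhom g) (fhom f) }.
Arguments fhom {C C'} _ {a b} _.

(* A morphism packed together with its source and target, so that morphisms
   between possibly different objects can be compared by (Leibniz) equality. *)
Definition arr (C : Category) := {ab : C * C & hom ab.1 ab.2}.
Definition pk (C : Category) (a b : C) (f : hom a b) : arr C :=
  existT (fun ab : C * C => hom ab.1 ab.2) (a, b) f.

(* sg i = sigma_{i+1} : D_i -> D_{i+1},  tg i = tau_{i+1}              *)
Record Globular (C : Category) := {
  D : nat -> C;
  sg : forall i, hom (D i) (D i.+1);
  tg : forall i, hom (D i) (D i.+1);
  glob_s : forall i, comp (sg i.+1) (sg i) = comp (tg i.+1) (sg i);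
  glob_t : forall i, comp (sg i.+1) (tg i) = comp (tg i.+1) (tg i) }.

Section Iterated.
Variables (C : Category) (G : Globular C).

Definition castD (i i' : nat) (e : i = i') : hom (D G i) (D G i') :=
  match e in _ = i' return hom (D G i) (D G i') with erefl => idm _ end.

Fixpoint sgn (j n : nat) : hom (D G j) (D G (Nat.add n j)) :=
  match n with 0 => idm _ | n'.+1 => comp (sg G (Nat.add n' j)) (sgn j n') end.
Fixpoint tgn (j n : nat) : hom (D G j) (D G (Nat.add n j)) :=
  match n with 0 => idm _ | n'.+1 => comp (tg G (Nat.add n' j)) (tgn j n') end.

Definition sgm (j i : nat) (H : j <= i) : hom (D G j) (D G i) :=
  comp (@castD (Nat.add (i - j) j) i (subnK H)) (sgn j (i - j)).
Definition tgm (j i : nat) (H : j <= i) : hom (D G j) (D G i) :=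
  comp (@castD (Nat.add (i - j) j) i (subnK H)) (tgn j (i - j)).

(* Tables of globular sums  D_{i_1} amalg_{D_{i'_1}} ... amalg D_{i_n}:
   ds = [:: i_1; ...; i_n], ls = [:: i'_1; ...; i'_{n-1}],
   with i_k > i'_k < i_{k+1}. *)
Definition valid (ds ls : seq nat) : bool :=
  (size ds == (size ls).+1) &&
  [forall k : 'I_(size ls), (nth 0 ls k < nth 0 ds k) && (nth 0 ls k < nth 0 ds k.+1)].

Definition cocone (ds ls : seq nat) (X : C)
    (f : forall k : 'I_(size ds), hom (D G (nth 0 ds k)) X) : Prop :=
  forall (k : nat) (Hk : k.+1 < size ds)
         (H : nth 0 ls k <= nth 0 ds k) (H' : nth 0 ls k <= nth 0 ds k.+1),
    comp (f (Ordinal (ltnW Hk))) (sgm H) = comp (f (Ordinal Hk)) (tgm H').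

End Iterated.
Arguments cocone {C} G {ds} ls {X} f.
Arguments sgm {C} G {j i} H.
Arguments tgm {C} G {j i} H.
Arguments castD {C} G {i i'} e.


Record GlobExt := {
  gcat :> Category;
  gglob : Globular gcat;
  GS : forall ds ls : seq nat, valid ds ls -> gcat;
  inj : forall ds ls (V : valid ds ls) (k : 'I_(size ds)),
      hom (D gglob (nth 0 ds k)) (GS V);
  inj_cocone : forall ds ls (V : valid ds ls), cocone gglob ls (inj V);
  inj_univ : forall ds ls (V : valid ds ls) (X : gcat)
      (f : forall k : 'I_(size ds), hom (D gglob (nth 0 ds k)) X),
      cocone gglob ls f ->
      exists u : hom (GS V) X,
        (forall k, comp u (inj V k) = f k) /\
        (forall v : hom (GS V) X, (forall k, comp v (inj V k) = f k) -> v = u) }.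

(* Groupoidal structure: nabla^i_j, kappa_i, omega^i_j and the axioms  *)
(* dual to those of strict infinity-groupoids.                         *)
(* In D_i amalg_{D_j} D_i, coprojection 0 is glued along its source    *)
(* and plays the role of u in u *_j v, coprojection 1 plays v.        *)
Section GrpLaws.
Variable E : GlobExt.
Local Notation G := (gglob E).
Local Notation DD := (D G).
Variable nab : forall i j (V : valid [:: i; i] [:: j]), hom (DD i) (GS E V).
Variable kap : forall i, hom (DD i.+1) (DD i).
Variable omg : forall i j, j < i -> hom (DD i) (DD i).

Definition ij ds ls (V : valid ds ls) k (H : k < size ds) := inj E V (Ordinal H).
Arguments ij {ds ls} V k H.

Fixpoint kpn (j n : nat) : hom (DD (Nat.add n j)) (DD j) :=
  match n with 0 => idm _ | n'.+1 => comp (kpn j n') (kap (Nat.add n' j)) end.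
Definition kpm (j i : nat) (H : j <= i) : hom (DD i) (DD j) :=
  comp (kpn j (i - j)) (@castD _ G i (Nat.add (i - j) j) (esym (subnK H))).

Definition nab_st_top : Prop :=
  forall j (V : valid [:: j.+1; j.+1] [:: j]),
    comp (nab V) (sg G j) = comp (ij V 1 isT) (sg G j) /\
    comp (nab V) (tg G j) = comp (ij V 0 isT) (tg G j).

Definition nab_st_low : Prop :=
  forall i j (V : valid [:: i.+1; i.+1] [:: j]) (V' : valid [:: i; i] [:: j])
         (ms mt : hom (GS E V') (GS E V)),
    comp ms (ij V' 0 isT) = comp (ij V 0 isT) (sg G i) ->
    comp ms (ij V' 1 isT) = comp (ij V 1 isT) (sg G i) ->
    comp mt (ij V' 0 isT) = comp (ij V 0 isT) (tg G i) ->
    comp mt (ij V' 1 isT) = comp (ij V 1 isT) (tg G i) ->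
    comp (nab V) (sg G i) = comp ms (nab V') /\
    comp (nab V) (tg G i) = comp mt (nab V').

Definition kap_st : Prop :=
  forall i, comp (kap i) (sg G i) = idm _ /\ comp (kap i) (tg G i) = idm _.

Definition omg_st_top : Prop :=
  forall j (H : j < j.+1),
    comp (omg H) (sg G j) = tg G j /\ comp (omg H) (tg G j) = sg G j.

Definition omg_st_low : Prop :=
  forall i j (H : j < i.+1) (H' : j < i),
    comp (omg H) (sg G i) = comp (sg G i) (omg H') /\
    comp (omg H) (tg G i) = comp (tg G i) (omg H').

(* associativity: (u *_j v) *_j w = u *_j (v *_j w) *)
Definition ax_assoc : Prop :=
  forall i j (V2 : valid [:: i; i] [:: j]) (V3 : valid [:: i; i; i] [:: j; j])
         (b b' l r : hom (GS E V2) (GS E V3)),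
    comp b (ij V2 0 isT) = ij V3 0 isT ->
    comp b (ij V2 1 isT) = ij V3 1 isT ->
    comp b' (ij V2 0 isT) = ij V3 1 isT ->
    comp b' (ij V2 1 isT) = ij V3 2 isT ->
    comp l (ij V2 0 isT) = comp b (nab V2) ->
    comp l (ij V2 1 isT) = ij V3 2 isT ->
    comp r (ij V2 0 isT) = ij V3 0 isT ->
    comp r (ij V2 1 isT) = comp b' (nab V2) ->
    comp l (nab V2) = comp r (nab V2).

(* exchange (i > j > k):
   (u *_j v) *_k (u' *_j v') = (u *_k u') *_j (v *_k v') *)
Definition ax_exchange : Prop :=
  forall i j k, k < j ->
  forall (Vj : valid [:: i; i] [:: j]) (Vk : valid [:: i; i] [:: k])
         (V4 : valid [:: i; i; i; i] [:: j; k; j])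
         (p p' R : hom (GS E Vj) (GS E V4)) (m m' L : hom (GS E Vk) (GS E V4)),
    comp p (ij Vj 0 isT) = ij V4 0 isT ->
    comp p (ij Vj 1 isT) = ij V4 1 isT ->
    comp p' (ij Vj 0 isT) = ij V4 2 isT ->
    comp p' (ij Vj 1 isT) = ij V4 3 isT ->
    comp m (ij Vk 0 isT) = ij V4 0 isT ->
    comp m (ij Vk 1 isT) = ij V4 2 isT ->
    comp m' (ij Vk 0 isT) = ij V4 1 isT ->
    comp m' (ij Vk 1 isT) = ij V4 3 isT ->
    comp L (ij Vk 0 isT) = comp p (nab Vj) ->
    comp L (ij Vk 1 isT) = comp p' (nab Vj) ->
    comp R (ij Vj 0 isT) = comp m (nab Vk) ->
    comp R (ij Vj 1 isT) = comp m' (nab Vk) ->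
    comp L (nab Vk) = comp R (nab Vj).

(* units: k^i_j(t^i_j u) *_j u = u = u *_j k^i_j(s^i_j u) *)
Definition ax_units : Prop :=
  forall i j (V : valid [:: i; i] [:: j]) (H : j <= i) (a b : hom (GS E V) (DD i)),
    (comp a (ij V 0 isT) = comp (tgm G H) (kpm H) ->
     comp a (ij V 1 isT) = idm _ ->
     comp a (nab V) = idm _) /\
    (comp b (ij V 0 isT) = idm _ ->
     comp b (ij V 1 isT) = comp (sgm G H) (kpm H) ->
     comp b (nab V) = idm _).

(* functoriality of units: k_i(u *_j v) = k_i(u) *_j k_i(v) *)
Definition ax_unit_funct : Prop :=
  forall i j (V : valid [:: i; i] [:: j]) (V' : valid [:: i.+1; i.+1] [:: j])
         (K : hom (GS E V') (GS E V)),
    comp K (ij V' 0 isT) = comp (ij V 0 isT) (kap i) ->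
    comp K (ij V' 1 isT) = comp (ij V 1 isT) (kap i) ->
    comp K (nab V') = comp (nab V) (kap i).

(* inverses: u *_j w_j(u) = k^i_j(t^i_j u),  w_j(u) *_j u = k^i_j(s^i_j u) *)
Definition ax_inverses : Prop :=
  forall i j (V : valid [:: i; i] [:: j]) (H : j < i) (c c' : hom (GS E V) (DD i)),
    (comp c (ij V 0 isT) = idm _ ->
     comp c (ij V 1 isT) = omg H ->
     comp c (nab V) = comp (tgm G (ltnW H)) (kpm (ltnW H))) /\
    (comp c' (ij V 0 isT) = omg H ->
     comp c' (ij V 1 isT) = idm _ ->
     comp c' (nab V) = comp (sgm G (ltnW H)) (kpm (ltnW H))).

Record GrpLaws : Prop := {
  gax_nab_st_top : nab_st_top;
  gax_nab_st_low : nab_st_low;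
  gax_kap_st : kap_st;
  gax_omg_st_top : omg_st_top;
  gax_omg_st_low : omg_st_low;
  gax_assoc : ax_assoc;
  gax_exchange : ax_exchange;
  gax_units : ax_units;
  gax_unit_funct : ax_unit_funct;
  gax_inverses : ax_inverses }.

End GrpLaws.

Record GrpExt := {
  gext :> GlobExt;
  nab : forall i j (V : valid [:: i; i] [:: j]), hom (D (gglob gext) i) (GS gext V);
  kap : forall i, hom (D (gglob gext) i.+1) (D (gglob gext) i);
  omg : forall i j, j < i -> hom (D (gglob gext) i) (D (gglob gext) i);
  grp_ax : GrpLaws nab kap omg }.

Record GrpMor (T T' : GrpExt) := {
  mF : Functor T T';
  mor_D : forall i, fob mF (D (gglob T) i) = D (gglob T') i;
  mor_sg : forall i, pk (fhom mF (sg (gglob T) i)) = pk (sg (gglob T') i);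
  mor_tg : forall i, pk (fhom mF (tg (gglob T) i)) = pk (tg (gglob T') i);
  mor_GS : forall ds ls (V : valid ds ls), fob mF (GS T V) = GS T' V;
  mor_inj : forall ds ls (V : valid ds ls) k,
      pk (fhom mF (inj T V k)) = pk (inj T' V k);
  mor_nab : forall i j (V : valid [:: i; i] [:: j]),
      pk (fhom mF (nab T V)) = pk (nab T' V);
  mor_kap : forall i, pk (fhom mF (kap T i)) = pk (kap T' i);
  mor_omg : forall i j (H : j < i), pk (fhom mF (omg T H)) = pk (omg T' H) }.

(* T is universal (initial): a unique morphism to every groupoidal extension
   (uniqueness as equality of the underlying functors on all morphisms). *)
Definition is_universal (T : GrpExt) : Prop :=
  forall T' : GrpExt, exists F : GrpMor T T',
    forall F' : GrpMor T T', forall (a b : T) (f : hom a b),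
      pk (fhom (mF F') f) = pk (fhom (mF F) f).

From Pilot Require Import Defs.
From mathcomp Require Import all_boot.
From Stdlib Require Import ProofIrrelevance ClassicalEpsilon Eqdep.
Import Pilot.Defs.
Set Implicit Arguments. Unset Strict Implicit. Unset Printing Implicit Defensive.

(* The iterated units D_i -> D_0 make every D_i an object of the slice
   category T/D_0, and the globular sums, nabla, kappa and omega lift to it
   (omega and nabla commute with the units by the unit and inverse axioms), so
   T/D_0 is again a groupoidal globular extension. By universality, the
   composite of the universal morphism T -> T/D_0 with the forgetful morphism
   T/D_0 -> T is the identity. Hence every y carries a map y -> D_0, and any
   g : y -> D_0 is sent to a morphism over D_0 with target (D_0, id), which
   forces g to be that map. *)

Section GlobularSums.
Variable E : GlobExt.
Local Notation G := (gglob E).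

Lemma GS_hom_eq ds ls (V : valid ds ls) (X : E) (u v : hom (GS E V) X) :
  (forall k, comp u (inj E V k) = comp v (inj E V k)) -> u = v.
Proof.
move=> Huv.
have cu : cocone G ls (fun k => comp u (inj E V k)).
  by move=> k Hk H H'; rewrite -!compA (inj_cocone E V).
have [w [_ Hw]] := inj_univ V cu.
by rewrite (Hw u (fun _ => erefl)) (Hw v (fun k => esym (Huv k))).
Qed.

Lemma ord2_ind (P : 'I_2 -> Prop) :
  P (Ordinal (isT : 0 < 2)) -> P (Ordinal (isT : 1 < 2)) -> forall k, P k.
Proof.
by move=> P0 P1 [[|[|m]] p] //; rewrite (bool_irrelevance p isT).
Qed.

Lemma valid_pair i j : j < i -> valid [:: i; i] [:: j].
Proof. by move=> H; apply/andP; split=> //; apply/forallP => k; rewrite (ord1 k) /= H. Qed.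

Lemma valid_pair_le i j : valid [:: i; i] [:: j] -> j <= i.
Proof. by case/andP=> _ /forallP /(_ ord0) /andP [/ltnW]. Qed.

(* The third branch is unreachable; it only makes the family total. *)
Definition pair_family i (X : E) (f0 f1 : hom (D G i) X) :
  forall k : 'I_(size [:: i; i]), hom (D G (nth 0 [:: i; i] k)) X :=
  fun k => match k with Ordinal m _ =>
    match m return hom (D G (nth 0 [:: i; i] m)) X with
    | 0 => f0
    | 1 => f1
    | n.+2 => comp f1 (comp (sgm G (leq0n i)) (castD G (nth_nil 0 n)))
    end end.

Lemma GS_pair_exists i j (V : valid [:: i; i] [:: j]) (X : E) (f0 f1 : hom (D G i) X) :
  (forall H : j <= i, comp f0 (sgm G H) = comp f1 (tgm G H)) ->
  exists u : hom (GS E V) X,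
    comp u (ij E V (k := 0) isT) = f0 /\ comp u (ij E V (k := 1) isT) = f1.
Proof.
move=> Hf.
have cc : cocone G [:: j] (pair_family f0 f1).
  move=> [|k] Hk //= H H'; rewrite (bool_irrelevance H' H); exact: Hf.
have [u [Hu _]] := inj_univ V cc.
by exists u; split; rewrite /ij Hu.
Qed.

End GlobularSums.

Section Slice.
Variables (C : Category) (x : C).

Definition slice_ob := {a : C & hom a x}.
Definition slice_hom (a b : slice_ob) :=
  {f : hom (projT1 a) (projT1 b) | comp (projT2 b) f = projT2 a}.

Lemma slice_hom_inj a b (f g : slice_hom a b) : sval f = sval g -> f = g.
Proof.
case: f g => f pf [g pg] /= Efg; subst g; f_equal; exact: proof_irrelevance.
Qed.

Definition slice_id (a : slice_ob) : slice_hom a a := exist _ (idm _) (compm1 _).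

Definition slice_comp (a b c : slice_ob) (g : slice_hom b c) (f : slice_hom a b) :
  slice_hom a c.
Proof. by exists (comp (sval g) (sval f)); rewrite compA (proj2_sig g) (proj2_sig f). Defined.

Definition slice : Category.
Proof.
refine (@Build_Category slice_ob slice_hom slice_id slice_comp _ _ _).
- by move=> a b c d f g h; apply: slice_hom_inj; exact: compA.
- by move=> a b f; apply: slice_hom_inj; exact: comp1m.
- by move=> a b f; apply: slice_hom_inj; exact: compm1.
Defined.

End Slice.

Section SliceGlobExt.
Variables (E : GlobExt) (x : E) (c : forall i, hom (D (gglob E) i) x).
Local Notation G := (gglob E).
Hypothesis c_sg : forall i, comp (c i.+1) (sg G i) = c i.
Hypothesis c_tg : forall i, comp (c i.+1) (tg G i) = c i.

Lemma cone_cast a b (e : a = b) : comp (c b) (castD G e) = c a.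
Proof. by case: b / e; rewrite compm1. Qed.

Lemma cone_sgm j i (H : j <= i) : comp (c i) (sgm G H) = c j.
Proof.
rewrite /sgm compA cone_cast; elim: (i - j) => [|n IH] /=; first exact: compm1.
by rewrite compA c_sg.
Qed.

Lemma cone_tgm j i (H : j <= i) : comp (c i) (tgm G H) = c j.
Proof.
rewrite /tgm compA cone_cast; elim: (i - j) => [|n IH] /=; first exact: compm1.
by rewrite compA c_tg.
Qed.

Lemma cone_cocone ds ls : cocone G ls (fun k : 'I_(size ds) => c (nth 0 ds k)).
Proof. by move=> k Hk H H'; rewrite cone_sgm cone_tgm. Qed.

Definition GS_to_apex ds ls (V : valid ds ls) : hom (GS E V) x :=
  proj1_sig (constructive_indefinite_description _ (inj_univ V (@cone_cocone ds ls))).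

Lemma GS_to_apex_inj ds ls (V : valid ds ls) k :
  comp (GS_to_apex V) (inj E V k) = c (nth 0 ds k).
Proof.
rewrite /GS_to_apex; case: constructive_indefinite_description => u [Hu _] /=.
exact: Hu.
Qed.

Local Notation S := (slice x).

Definition slice_D i : S := existT _ (D G i) (c i).
Definition slice_sg i : @hom S (slice_D i) (slice_D i.+1) := exist _ (sg G i) (c_sg i).
Definition slice_tg i : @hom S (slice_D i) (slice_D i.+1) := exist _ (tg G i) (c_tg i).

Definition slice_glob : Globular S.
Proof.
refine (@Build_Globular S slice_D slice_sg slice_tg _ _).
- by move=> i; apply: slice_hom_inj; exact: glob_s.
- by move=> i; apply: slice_hom_inj; exact: glob_t.
Defined.

Lemma sval_castD a b (e : a = b) : sval (castD slice_glob e) = castD G e.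
Proof. by case: b / e. Qed.
Lemma sval_sgn j n : sval (sgn slice_glob j n) = sgn G j n.
Proof. by elim: n => [|n IH] //=; rewrite IH. Qed.
Lemma sval_tgn j n : sval (tgn slice_glob j n) = tgn G j n.
Proof. by elim: n => [|n IH] //=; rewrite IH. Qed.

Definition slice_GS ds ls (V : valid ds ls) : S := existT _ (GS E V) (GS_to_apex V).
Definition slice_inj ds ls (V : valid ds ls) (k : 'I_(size ds)) :
  @hom S (slice_D (nth 0 ds k)) (slice_GS V) := exist _ (inj E V k) (GS_to_apex_inj V k).

Lemma slice_inj_cocone ds ls (V : valid ds ls) : cocone slice_glob ls (slice_inj V).
Proof.
move=> k Hk H H'; apply: slice_hom_inj => /=.
rewrite ?sval_castD ?sval_sgn ?sval_tgn; exact: inj_cocone.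
Qed.

Lemma slice_inj_univ ds ls (V : valid ds ls) (X : S)
    (f : forall k : 'I_(size ds), @hom S (slice_D (nth 0 ds k)) X) :
  cocone slice_glob ls f ->
  exists u : @hom S (slice_GS V) X,
    (forall k, comp u (slice_inj V k) = f k) /\
    (forall v : @hom S (slice_GS V) X, (forall k, comp v (slice_inj V k) = f k) -> v = u).
Proof.
move=> cf.
have cf0 : cocone G ls (fun k => sval (f k)).
  move=> k Hk H H'; have := f_equal (@proj1_sig _ _) (cf k Hk H H').
  by rewrite /= ?sval_castD ?sval_sgn ?sval_tgn.
have [u [Hu Hun]] := inj_univ V cf0.
have pu : comp (projT2 X) u = GS_to_apex V.
  by apply: GS_hom_eq => k; rewrite -compA Hu GS_to_apex_inj (proj2_sig (f k)).
exists (exist _ u pu); split=> [k|v Hv]; apply: slice_hom_inj => /=; first exact: Hu.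
by apply: Hun => k; exact: (f_equal (@proj1_sig _ _) (Hv k)).
Qed.

Definition slice_globext : GlobExt :=
  @Build_GlobExt S slice_glob slice_GS slice_inj slice_inj_cocone slice_inj_univ.

End SliceGlobExt.

Section SliceOverD0.
Variable T : GrpExt.
Local Notation G := (gglob T).
Local Notation DD := (D (gglob T)).

Fixpoint unit0 i : hom (DD i) (DD 0) :=
  match i with 0 => idm _ | i'.+1 => comp (unit0 i') (kap T i') end.

Lemma kap_sg i : comp (kap T i) (sg G i) = idm _.
Proof. by case: (gax_kap_st (grp_ax T) i). Qed.
Lemma kap_tg i : comp (kap T i) (tg G i) = idm _.
Proof. by case: (gax_kap_st (grp_ax T) i). Qed.

Lemma unit0_sg i : comp (unit0 i.+1) (sg G i) = unit0 i.
Proof. by rewrite /= -compA kap_sg compm1. Qed.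
Lemma unit0_tg i : comp (unit0 i.+1) (tg G i) = unit0 i.
Proof. by rewrite /= -compA kap_tg compm1. Qed.

Lemma unit0_kpm j i (H : j <= i) : comp (unit0 j) (kpm (kap T) H) = unit0 i.
Proof.
rewrite /kpm compA.
have -> : comp (unit0 j) (kpn (kap T) j (i - j)) = unit0 (Nat.add (i - j) j).
  by elim: (i - j) => [|n IH] /=; rewrite ?compm1 // compA IH.
exact: cone_cast.
Qed.

Lemma cast_cancel n j i (e : Nat.add n j = i) (X Y : T)
    (f : hom (DD (Nat.add n j)) Y) (g : hom X (DD (Nat.add n j))) :
  comp (comp f (castD G (esym e))) (comp (castD G e) g) = comp f g.
Proof. by case: i / e => /=; rewrite compm1 comp1m. Qed.

Lemma kpm_sgm j i (H : j <= i) : comp (kpm (kap T) H) (sgm G H) = idm _.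
Proof.
rewrite /kpm /sgm cast_cancel.
by elim: (i - j) => [|n IH] /=; rewrite ?compm1 // -compA (compA (sgn G j n)) kap_sg comp1m.
Qed.

Lemma kpm_tgm j i (H : j <= i) : comp (kpm (kap T) H) (tgm G H) = idm _.
Proof.
rewrite /kpm /tgm cast_cancel.
by elim: (i - j) => [|n IH] /=; rewrite ?compm1 // -compA (compA (tgn G j n)) kap_tg comp1m.
Qed.

Lemma omg_sgn n j (H : j < Nat.add n.+1 j) :
  comp (omg T H) (sgn G j n.+1) = tgn G j n.+1.
Proof.
elim: n H => [|n IH] H /=.
  by rewrite !compm1; case: (gax_omg_st_top (grp_ax T) H).
have H' : j < Nat.add n.+1 j by rewrite plusE addSn ltnS leq_addl.
have [omg_sg _] := gax_omg_st_low (grp_ax T) H H'.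
rewrite compA omg_sg -compA (IH H') /= !compA; congr (comp _ _); exact: glob_t.
Qed.

Lemma omg_sgm j i (H : j < i) (H0 : j <= i) : comp (omg T H) (sgm G H0) = tgm G H0.
Proof.
rewrite /sgm /tgm; move: (subnK H0).
case Eij: (i - j) => [|n] e; first by move/eqP: Eij; rewrite subn_eq0 leqNgt H.
by case: i / e H H0 Eij => H H0 _ /=; rewrite !comp1m omg_sgn.
Qed.

Lemma unit0_sgm j i (H : j <= i) : comp (unit0 i) (sgm G H) = unit0 j.
Proof. exact: (cone_sgm unit0_sg H). Qed.
Lemma unit0_tgm j i (H : j <= i) : comp (unit0 i) (tgm G H) = unit0 j.
Proof. exact: (cone_tgm unit0_tg H). Qed.

Lemma nab_right_unit i j (V : valid [:: i; i] [:: j]) (H : j <= i) :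
  exists b : hom (GS T V) (DD i),
    [/\ comp b (ij T V (k := 0) isT) = idm _,
        comp b (ij T V (k := 1) isT) = comp (sgm G H) (kpm (kap T) H)
      & comp b (nab T V) = idm _].
Proof.
have [b [b0 b1]] : exists b : hom (GS T V) (DD i),
    comp b (ij T V (k := 0) isT) = idm _ /\
    comp b (ij T V (k := 1) isT) = comp (sgm G H) (kpm (kap T) H).
  apply: GS_pair_exists => H1.
  by rewrite (bool_irrelevance H1 H) -compA kpm_tgm compm1 comp1m.
have [_ unit_b] := gax_units (grp_ax T) H b b.
by exists b; split; last exact: unit_b.
Qed.

(* unit0 omega = unit0 omega b nabla = unit0 c nabla = unit0 s k = unit0, where
   b is the right unit and c nabla = s k is the inverse law. *)
Lemma unit0_omg j i (H : j < i) : comp (unit0 i) (omg T H) = unit0 i.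
Proof.
have V := valid_pair H.
have H0 : j <= i := ltnW H.
have [b [b0 b1 b_nab]] := nab_right_unit V H0.
have [c [c0 c1]] : exists c : hom (GS T V) (DD i),
    comp c (ij T V (k := 0) isT) = omg T H /\ comp c (ij T V (k := 1) isT) = idm _.
  by apply: GS_pair_exists => H1; rewrite omg_sgm comp1m.
have [_ inverse_c] := gax_inverses (grp_ax T) H c c.
have Ebc : comp (comp (unit0 i) (omg T H)) b = comp (unit0 i) c.
  apply: GS_hom_eq; elim/ord2_ind.
    by rewrite -[LHS]compA b0 compm1 -[RHS]compA c0.
  rewrite -[LHS]compA b1 -[RHS]compA c1 compm1 compA -(compA _ (omg T H)) omg_sgm.
  by rewrite unit0_tgm unit0_kpm.
rewrite -[LHS]compm1 -b_nab compA Ebc -compA (inverse_c c0 c1).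
by rewrite compA unit0_sgm unit0_kpm.
Qed.

Local Notation to0 V := (GS_to_apex unit0_sg unit0_tg V).

Lemma GS_to0_nab i j (V : valid [:: i; i] [:: j]) : comp (to0 V) (nab T V) = unit0 i.
Proof.
have [b [b0 b1 b_nab]] := nab_right_unit V (valid_pair_le V).
have -> : to0 V = comp (unit0 i) b.
  apply: GS_hom_eq; elim/ord2_ind; rewrite GS_to_apex_inj -compA ?b0 ?b1.
    by rewrite compm1.
  by rewrite compA unit0_sgm unit0_kpm.
by rewrite -compA b_nab compm1.
Qed.

Local Notation S := (slice_globext unit0_sg unit0_tg).

Definition slice_nab i j (V : valid [:: i; i] [:: j]) :
  @hom S (slice_D unit0 i) (slice_GS unit0_sg unit0_tg V) := exist _ (nab T V) (GS_to0_nab V).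
Definition slice_kap i : @hom S (slice_D unit0 i.+1) (slice_D unit0 i) :=
  exist _ (kap T i) erefl.
Definition slice_omg i j (H : j < i) : @hom S (slice_D unit0 i) (slice_D unit0 i) :=
  exist _ (omg T H) (unit0_omg H).

Lemma sval_kpn j n : sval (kpn (E := S) slice_kap j n) = kpn (kap T) j n.
Proof. by elim: n => [|n IH] //=; rewrite IH. Qed.

Ltac sval_hyps := repeat match goal with
  | H : _ = _ |- _ => apply (f_equal (@proj1_sig _ _)) in H; simpl in H;
      rewrite ?sval_castD ?sval_sgn ?sval_tgn ?sval_kpn in H
  end.
Ltac sval_goal := apply: slice_hom_inj => /=; rewrite ?sval_castD ?sval_sgn ?sval_tgn ?sval_kpn.

(* Every law is an equation between morphisms, and sval is faithful. *)
Lemma slice_grp_laws : GrpLaws (E := S) slice_nab slice_kap slice_omg.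
Proof.
have L := grp_ax T.
constructor.
- move=> j V; have [h1 h2] := gax_nab_st_top L V; split; sval_goal; [exact h1|exact h2].
- move=> i j V V' ms mt e1 e2 e3 e4; sval_hyps.
  have [h1 h2] := gax_nab_st_low L e1 e2 e3 e4; split; sval_goal; [exact h1|exact h2].
- move=> i; have [h1 h2] := gax_kap_st L i; split; sval_goal; [exact h1|exact h2].
- move=> j H; have [h1 h2] := gax_omg_st_top L H; split; sval_goal; [exact h1|exact h2].
- move=> i j H H'; have [h1 h2] := gax_omg_st_low L H H'.
  by split; sval_goal; [exact h1|exact h2].
- move=> i j V2 V3 b b' l r e1 e2 e3 e4 e5 e6 e7 e8; sval_hyps; sval_goal.
  exact: (gax_assoc L e1 e2 e3 e4 e5 e6 e7 e8).
- move=> i j k Hkj Vj Vk V4 p p' R m m' Lm e1 e2 e3 e4 e5 e6 e7 e8 e9 e10 e11 e12.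
  sval_hyps; sval_goal.
  exact: (gax_exchange L Hkj e1 e2 e3 e4 e5 e6 e7 e8 e9 e10 e11 e12).
- move=> i j V H a b; have [h1 h2] := gax_units L H (sval a) (sval b).
  by split=> e1 e2; sval_hyps; sval_goal; [exact: h1 | exact: h2].
- by move=> i j V V' K e1 e2; sval_hyps; sval_goal; exact: (gax_unit_funct L e1 e2).
- move=> i j V H c c'; have [h1 h2] := gax_inverses L H (sval c) (sval c').
  by split=> e1 e2; sval_hyps; sval_goal; [exact: h1 | exact: h2].
Qed.

Definition slice_grpext : GrpExt := Build_GrpExt slice_grp_laws.

End SliceOverD0.

Definition forget_functor (T : GrpExt) : Functor (slice_grpext T) T :=
  @Build_Functor (slice_grpext T) T (fun a => projT1 a) (fun a b f => sval f)
    (fun _ => erefl) (fun _ _ _ _ _ => erefl).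

Definition forget_grpmor (T : GrpExt) : GrpMor (slice_grpext T) T.
Proof. by refine (@Build_GrpMor (slice_grpext T) T (forget_functor T) _ _ _ _ _ _ _ _). Defined.

Definition id_functor (C : Category) : Functor C C :=
  @Build_Functor C C id (fun a b f => f) (fun _ => erefl) (fun _ _ _ _ _ => erefl).

Definition id_grpmor (T : GrpExt) : GrpMor T T.
Proof. by refine (@Build_GrpMor T T (id_functor T) _ _ _ _ _ _ _ _). Defined.

Definition comp_functor (A B C : Category) (F : Functor A B) (F' : Functor B C) :
  Functor A C.
Proof.
refine (@Build_Functor A C (fun a => fob F' (fob F a))
                       (fun a b f => fhom F' (fhom F f)) _ _).
- by move=> a; rewrite !fhom_id.
- by move=> a b c f g; rewrite !fhom_comp.
Defined.

Definition map_arr (A B : Category) (F : Functor A B) (f : arr A) : arr B :=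
  pk (fhom F (projT2 f)).

Definition comp_grpmor (A B C : GrpExt) (F : GrpMor A B) (F' : GrpMor B C) : GrpMor A C.
Proof.
refine (@Build_GrpMor A C (comp_functor (mF F) (mF F')) _ _ _ _ _ _ _ _).
- by move=> i /=; rewrite (mor_D F) (mor_D F').
- by move=> i; rewrite /= -(mor_sg F'); exact: (f_equal (map_arr (mF F')) (mor_sg F i)).
- by move=> i; rewrite /= -(mor_tg F'); exact: (f_equal (map_arr (mF F')) (mor_tg F i)).
- by move=> ds ls V /=; rewrite (mor_GS F) (mor_GS F').
- move=> ds ls V k; rewrite /= -(mor_inj F').
  exact: (f_equal (map_arr (mF F')) (mor_inj F V k)).
- move=> i j V; rewrite /= -(mor_nab F').
  exact: (f_equal (map_arr (mF F')) (mor_nab F V)).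
- by move=> i; rewrite /= -(mor_kap F'); exact: (f_equal (map_arr (mF F')) (mor_kap F i)).
- move=> i j H; rewrite /= -(mor_omg F').
  exact: (f_equal (map_arr (mF F')) (mor_omg F H)).
Defined.

Lemma pk_eq_rect (C : Category) (z a b : C) (e : a = b) (p : hom a z) :
  pk (eq_rect a (fun y => hom y z) p b e) = pk p.
Proof. by case: b / e. Qed.

Lemma terminal_of_slice_section (C : Category) (x : C) (F : Functor C (slice x)) :
  fob F x = existT (fun a => hom a x) x (idm x) ->
  (forall a b (f : hom a b), pk (sval (fhom F f)) = pk f) ->
  is_terminal x.
Proof.
move=> Fx HF y.
have Ey : projT1 (fob F y) = y := f_equal (fun f => (projT1 f).1) (HF y y (idm y)).
exists (eq_rect _ (fun a => hom a x) (projT2 (fob F y)) _ Ey) => g.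
apply: (Eqdep.EqdepTheory.inj_pair2 _ (fun ab : C * C => hom ab.1 ab.2) (y, x)).
rewrite -[LHS]/(pk g) -[RHS]/(pk _) pk_eq_rect -(HF _ _ g).
move: (fhom F g); rewrite Fx => m.
by have := proj2_sig m; rewrite /= comp1m => ->.
Qed.

Theorem proposition8p1 (T : GrpExt) :
  is_universal T -> is_terminal (D (gglob T) 0).
Proof.
move=> univT.
have [F _] := univT (slice_grpext T).
have [F1 F1_unique] := univT T.
apply: (@terminal_of_slice_section _ _ (mF F)); first exact: (mor_D F 0).
move=> a b f.
by rewrite -[LHS]/(pk (fhom (mF (comp_grpmor F (forget_grpmor T))) f)) F1_unique
           -(F1_unique (id_grpmor T)).
Qed.
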